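(* For every probabilistic single-item auction there exists an optimal (expected-revenue-maximizing) mixed signaling scheme in which, for every signal $S$ with $|\mathrm{supp}(S)|\ge 2$, the highest and second-highest bids are equal, i.e. $\sum_j\psi_{w_1(S),j}\varphi(j,S)=\sum_j\psi_{w_2(S),j}\varphi(j,S)$.
   Context: A probabilistic single-item auction: $n\ge 2$ bidders, $m$ item types with probabilities $p_j$, nonnegative valuations $v_{i,j}$; $\psi_{i,j}=p_jv_{i,j}$. A mixed signaling scheme is a finite signal set $\mathcal{S}$ and $\varphi:[m]\times\mathcal{S}\to[0,1]$ with $\sum_S\varphi(j,S)=1$ for each $j$; $\mathrm{supp}(S)=\{j:\varphi(j,S)>0\}$. Its expected revenue is $\sum_S\mathrm{max2}_i\{\sum_j\psi_{i,j}\varphi(j,S)\}$ ($\mathrm{max2}$ = second-largest entry with multiplicity). $w_1(S)$ and $w_2(S)$ are the bidders with the largest and second-largest value of $\sum_j\psi_{i,j}\varphi(j,S)$ (ties broken by a fixed priority order). Bids after signal $S$ are these quantities divided by the common factor $\sum_jp_j\varphi(j,S)$. *)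

From mathcomp Require Import all_boot all_order all_algebra.
From mathcomp Require Import reals.
Set Implicit Arguments. Unset Strict Implicit. Unset Printing Implicit Defensive.
Import Order.TTheory GRing.Theory Num.Theory.
Local Open Scope ring_scope.

Section Auction.
Variable R : realType.

Definition sorted_vals (n : nat) (x : 'I_n -> R) : seq R :=
  sort (fun a b => b <= a) [seq x i | i <- enum 'I_n].

(* largest entry = bid of w_1(S); second-largest entry with multiplicity = bid of w_2(S) *)
Definition max1 (n : nat) (x : 'I_n -> R) : R := nth 0 (sorted_vals x) 0.
Definition max2 (n : nat) (x : 'I_n -> R) : R := nth 0 (sorted_vals x) 1.

Definition psi (n m : nat) (p : 'I_m -> R) (v : 'I_n -> 'I_m -> R) i j : R :=
  p j * v i j.

Definition is_scheme (m : nat) (S : finType) (phi : 'I_m -> S -> R) : Prop :=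
  (forall j s, 0 <= phi j s <= 1) /\ (forall j, \sum_(s : S) phi j s = 1).

Definition supp (m : nat) (S : finType) (phi : 'I_m -> S -> R) (s : S) : {set 'I_m} :=
  [set j | 0 < phi j s].

Definition weight (n m : nat) (p : 'I_m -> R) (v : 'I_n -> 'I_m -> R)
  (S : finType) (phi : 'I_m -> S -> R) (s : S) (i : 'I_n) : R :=
  \sum_(j < m) psi p v i j * phi j s.

Definition revenue (n m : nat) (p : 'I_m -> R) (v : 'I_n -> 'I_m -> R)
  (S : finType) (phi : 'I_m -> S -> R) : R :=
  \sum_(s : S) max2 (weight p v phi s).

End Auction.

(* Restrict to canonical schemes, whose signals are either a pair (a, b) of
   bidders or a pure signal reserved for a single item.  Any scheme pools into a
   canonical one without losing revenue: group its signals by a pair realising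
   the second-highest bid, and note that along a fixed pair the second-highest
   bid is superadditive.  Canonical schemes form a compact set on which the
   revenue is continuous (the second-highest bid is a maximum of pairwise
   minima), so some canonical scheme maximises the revenue and, among the
   maximisers, minimises the mass put on pair signals.  Pure signals have
   support of size at most one; if on a pair signal the two highest bids
   differed, moving a little mass of an item that the winner values more than
   the runner-up to the pure signal of that item would keep the revenue and
   lower the pair mass. *)

From mathcomp Require Import all_boot all_order all_algebra.
From mathcomp Require Import reals.
From mathcomp Require Import all_classical all_reals all_analysis.
From mathcomp Require Import ring lra.
Set Implicit Arguments. Unset Strict Implicit. Unset Printing Implicit Defensive.
Import Order.TTheory GRing.Theory Num.Theory.
Import numFieldNormedType.Exports.
Local Open Scope ring_scope.

Section SortedNonincreasing.
Variable R : realType.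
Implicit Types s : seq R.

Local Notation nonincr := (fun a b : R => b <= a).

Lemma nth_sorted_nonincr s k l : sorted nonincr s -> (k <= l < size s)%N ->
  nth 0 s l <= nth 0 s k.
Proof.
move=> ss /andP[kl ls].
have nonincr_trans : transitive nonincr by move=> y z w h1 h2; exact: le_trans h2 h1.
have := sorted_leq_nth nonincr_trans (fun y : R => lexx y) 0 ss.
by apply; rewrite ?inE // (leq_ltn_trans kl).
Qed.

Lemma count_gt_nth_sorted s k : sorted nonincr s ->
  (count (fun y => (nth 0 s k < y)%R) s <= k)%N.
Proof.
move=> ss; set y0 := nth 0 s k.
rewrite -(cat_take_drop k s) count_cat.
have -> : count (fun y => y0 < y) (drop k s) = 0%N.
  rewrite (@eq_in_count _ _ pred0) ?count_pred0 //.
  move=> y /(nthP 0) [i]; rewrite size_drop ltn_subRL => ils <-.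
  by rewrite nth_drop /= ltNge nth_sorted_nonincr // leq_addr.
by rewrite addn0; apply: leq_trans (count_size _ _) _; rewrite size_take_min geq_minl.
Qed.

Lemma count_ge_nth_sorted s k : sorted nonincr s -> (k < size s)%N ->
  (k < count (fun y => (nth 0 s k <= y)%R) s)%N.
Proof.
move=> ss ks; set y0 := nth 0 s k.
rewrite -(cat_take_drop k.+1 s) count_cat.
apply: leq_trans (leq_addr _ _).
rewrite (@eq_in_count _ _ predT) ?count_predT ?size_takel //.
move=> y /(nthP 0) [i]; rewrite size_takel // => ik <-.
by rewrite nth_take // nth_sorted_nonincr // -ltnS ik.
Qed.

End SortedNonincreasing.

Section OrderStatistics.
Variables (R : realType) (n : nat).
Implicit Types x : 'I_n -> R.

Lemma size_sorted_vals x : size (sorted_vals x) = n.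
Proof. by rewrite size_sort size_map size_enum_ord. Qed.

Lemma sorted_vals_nonincr x : sorted (fun a b => b <= a) (sorted_vals x).
Proof. by apply: sort_sorted => a b; exact: le_total. Qed.

Lemma count_sorted_vals x (P : pred R) :
  count P (sorted_vals x) = #|[pred i | P (x i)]|.
Proof.
by rewrite (permP (permEl (perm_sort _ _))) count_map cardE -size_filter enumT.
Qed.

Lemma le_max1 x a : x a <= max1 x.
Proof.
rewrite leNgt; apply/negP => gt_a.
have := count_gt_nth_sorted 0 (sorted_vals_nonincr x).
by rewrite count_sorted_vals leqn0 => /eqP/card0_eq/(_ a); rewrite !inE gt_a.
Qed.

Lemma max1_attained x : (0 < n)%N -> exists a, x a = max1 x.
Proof.
move=> n_gt0; have := count_ge_nth_sorted (k := 0) (sorted_vals_nonincr x).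
rewrite size_sorted_vals count_sorted_vals => /(_ n_gt0) /card_gt0P [a].
by rewrite inE => ge_a; exists a; apply/le_anti; rewrite le_max1.
Qed.

Lemma min_le_max2 x a b : a != b -> Num.min (x a) (x b) <= max2 x.
Proof.
move=> ab; rewrite leNgt lt_min; apply/negP => /andP[gt_a gt_b].
have := count_gt_nth_sorted 1 (sorted_vals_nonincr x).
rewrite count_sorted_vals leqNgt => /negP; apply; apply/card_gt1P.
by exists a, b; rewrite !inE gt_a gt_b.
Qed.

Lemma max2_attained x : (1 < n)%N ->
  exists a b, [/\ a != b, max2 x <= x a & max2 x <= x b].
Proof.
move=> n_gt1; have := count_ge_nth_sorted (k := 1) (sorted_vals_nonincr x).
rewrite size_sorted_vals count_sorted_vals => /(_ n_gt1) /card_gt1P.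
by case=> a [b [ge_a ge_b ab]]; exists a, b.
Qed.

Lemma sum_max2_le (I : finType) (P : pred I) (w : I -> 'I_n -> R) a b : a != b ->
  (forall s, P s -> max2 (w s) = Num.min (w s a) (w s b)) ->
  \sum_(s | P s) max2 (w s) <= max2 (fun i => \sum_(s | P s) w s i).
Proof.
move=> ab w_ab; apply: le_trans (min_le_max2 _ ab); rewrite le_min.
by apply/andP; split; apply: ler_sum => s Ps; rewrite w_ab // ge_min lexx ?orbT.
Qed.

Lemma max2_sub_ge x c a b : a != b -> x b = max2 x -> c a - c b <= x a - x b ->
  max2 x - c b <= max2 (fun i => x i - c i).
Proof.
move=> ab xb gap; rewrite -xb; apply: le_trans (min_le_max2 _ ab).
by rewrite le_min lexx andbT; lra.
Qed.

Hypothesis n_gt1 : (1 < n)%N.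

Lemma max2_min_pair x : exists a b, a != b /\ max2 x = Num.min (x a) (x b).
Proof.
have [a [b [ab ge_a ge_b]]] := max2_attained x n_gt1.
by exists a, b; split => //; apply/le_anti; rewrite min_le_max2 // le_min ge_a ge_b.
Qed.

Lemma max2_le_max1 x : max2 x <= max1 x.
Proof.
have [a [b [_ ->]]] := max2_min_pair x.
by rewrite ge_min le_max1.
Qed.

Lemma max2_ge0 x : (forall i, 0 <= x i) -> 0 <= max2 x.
Proof. by move=> x_ge0; have [a [b [_ ->]]] := max2_min_pair x; rewrite le_min !x_ge0. Qed.

Lemma max2_scale x c : 0 <= c -> max2 (fun i => c * x i) = c * max2 x.
Proof.
move=> c_ge0; apply/le_anti/andP; split.
  have [a [b [ab ->]]] := max2_min_pair (fun i => c * x i).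
  by rewrite -minr_pMr // ler_wpM2l // min_le_max2.
have [a [b [ab ->]]] := max2_min_pair x.
by rewrite minr_pMr // (min_le_max2 (fun i => c * x i)).
Qed.

Lemma max2_scaleD x q e a b : a != b -> x b <= x a -> 0 <= q -> 0 <= e ->
  max2 (fun i => q * x i) + e * x b <= max2 (fun i => q * x i + e * x i).
Proof.
move=> ab xba q_ge0 e_ge0.
have -> : (fun i => q * x i + e * x i) = (fun i => (q + e) * x i).
  by apply/funext => i; rewrite mulrDl.
rewrite !max2_scale ?addr_ge0 // mulrDl lerD2l ler_wpM2l //.
by apply: le_trans (min_le_max2 _ ab); rewrite min_r.
Qed.

Lemma max2_gap x : max1 x != max2 x ->
  exists a b, [/\ a != b, x b = max2 x & x b < x a].
Proof.
move=> ne12; have [a xa] := max1_attained x (ltnW n_gt1).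
have [c [ca ge_c]] : exists c, c != a /\ max2 x <= x c.
  have [a' [b' [ab' ge_a' ge_b']]] := max2_attained x n_gt1.
  by case: (eqVneq a' a) => [<-|]; [exists b'; rewrite eq_sym | exists a'].
have xc : x c = max2 x.
  apply/le_anti; rewrite ge_c andbT.
  by have := min_le_max2 x ca; rewrite min_l // xa le_max1.
exists a, c; split; rewrite 1?eq_sym // xc xa.
by rewrite lt_neqAle eq_sym ne12 max2_le_max1.
Qed.

End OrderStatistics.

Section SecondPricePairs.
Variables (R : realType) (n : nat).
Implicit Types x : 'I_n -> R.

Definition max2_pairs x : R :=
  \big[Num.max/0]_(a < n) \big[Num.max/0]_(b < n | b != a) Num.min (x a) (x b).

Lemma max2_pairsE x : (1 < n)%N -> (forall i, 0 <= x i) -> max2_pairs x = max2 x.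
Proof.
move=> n_gt1 x_ge0; apply/le_anti/andP; split.
  apply: bigmax_le => [|a _]; first exact: max2_ge0.
  apply: bigmax_le => [|b ba]; first exact: max2_ge0.
  by apply: min_le_max2; rewrite eq_sym.
have [a [b [ab ->]]] := max2_min_pair n_gt1 x.
apply: le_trans (le_bigmax _ _ a); apply: le_trans (le_bigmax_cond _ _ _) => //.
by rewrite eq_sym.
Qed.

Lemma continuous_max2_pairs (T : topologicalType) (w : T -> 'I_n -> R) :
  (forall i, continuous (fun y => w y i)) -> continuous (fun y => max2_pairs (w y)).
Proof.
move=> w_cont; apply: continuous_big => [|a _]; first exact: max_continuous.
apply: continuous_big => [|b _]; first exact: max_continuous.
exact: min_fun_continuous.
Qed.

End SecondPricePairs.

Lemma closed_level (R : realType) (T : topologicalType) (f : T -> R) c :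
  continuous f -> closed [set y | f y = c].
Proof. by move=> f_cont; have := (continuous_closedP f).1 f_cont _ (@closed_eq _ c). Qed.

Lemma sum_indicator (R : ringType) (S : finType) (s0 : S) :
  \sum_(t : S) (t == s0)%:R = 1 :> R.
Proof. by rewrite (bigD1 s0) //= eqxx big1 ?addr0 // => t /negbTE ->. Qed.

Section SchemeTransfers.
Variables (R : realType) (n m : nat) (p : 'I_m -> R) (v : 'I_n -> 'I_m -> R).
Variable S : finType.
Implicit Types phi : 'I_m -> S -> R.

Definition transfer phi (j : 'I_m) (s s' : S) (e : R) : 'I_m -> S -> R :=
  fun j' t => if j' == j then phi j t + ((t == s')%:R - (t == s)%:R) * e
              else phi j' t.

Lemma weight_transfer phi j s s' e t i :
  weight p v (transfer phi j s s' e) t i =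
  weight p v phi t i + ((t == s')%:R - (t == s)%:R) * e * psi p v i j.
Proof.
rewrite /weight (bigD1 j) //= [in RHS](bigD1 j) //= /transfer eqxx.
rewrite (eq_bigr (fun j' => psi p v i j' * phi j' t)) => [|j' /negbTE -> //].
ring.
Qed.

Lemma transfer_is_scheme phi j s s' e : is_scheme phi -> s != s' ->
  0 <= e <= phi j s -> is_scheme (transfer phi j s s' e).
Proof.
move=> [phi01 phi_sum] ss' /andP[e_ge0 e_le].
split => [j' t | j']; rewrite /transfer; case: eqP => _; rewrite ?phi01 ?phi_sum //.
  have := phi01 j t; have := phi01 j s'.
  have : phi j s + phi j s' <= 1.
    rewrite -(phi_sum j) (bigD1 s) //= (bigD1 s') 1?eq_sym //= addrA lerDl.
    by apply: sumr_ge0 => u _; case/andP: (phi01 j u).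
  have [-> | ts] := eqVneq t s; first by rewrite (negbTE ss') /=; lra.
  by have [-> | ts'] := eqVneq t s'; rewrite /=; lra.
rewrite big_split /= phi_sum -big_distrl sumrB /= !sum_indicator; lra.
Qed.

Lemma revenue_transfer_ge phi j s s' e d : s != s' ->
  max2 (weight p v phi s) - d <= max2 (fun i => weight p v phi s i - e * psi p v i j) ->
  max2 (weight p v phi s') + d <= max2 (fun i => weight p v phi s' i + e * psi p v i j) ->
  revenue p v phi <= revenue p v (transfer phi j s s' e).
Proof.
move=> ss' loss gain.
have wE t : weight p v (transfer phi j s s' e) t =
    fun i => weight p v phi t i + ((t == s')%:R - (t == s)%:R) * e * psi p v i j.
  by apply/funext => i; rewrite weight_transfer.
have w_s : weight p v (transfer phi j s s' e) s =
    fun i => weight p v phi s i - e * psi p v i j.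
  by rewrite wE eqxx (negbTE ss') /=; apply/funext => i; ring.
have w_s' : weight p v (transfer phi j s s' e) s' =
    fun i => weight p v phi s' i + e * psi p v i j.
  by rewrite wE eqxx eq_sym (negbTE ss') /=; apply/funext => i; ring.
rewrite /revenue (bigD1 s) //= [in X in _ <= X](bigD1 s) //= w_s.
rewrite (bigD1 s') 1?eq_sym //= [in X in _ <= X](bigD1 s') 1?eq_sym //= w_s'.
rewrite [X in _ <= _ + (_ + X)](eq_bigr (fun t => max2 (weight p v phi t))); first lra.
move=> t /andP[ts ts']; rewrite wE (negbTE ts) (negbTE ts') /=; congr max2.
by apply/funext => i; ring.
Qed.

Lemma weight_lt_item phi s a b : (forall j, 0 <= phi j s) ->
  weight p v phi s b < weight p v phi s a ->
  exists j, 0 < phi j s /\ psi p v b j < psi p v a j.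
Proof.
move=> phi_ge0 lt_ba.
have /existsP [j dj_gt0] : [exists j, 0 < (psi p v a j - psi p v b j) * phi j s].
  apply: contraLR lt_ba; rewrite negb_exists => /forallP dj_le0.
  rewrite -leNgt -subr_le0 /weight -sumrB; apply: sumr_le0 => j _.
  by rewrite -mulrBl leNgt dj_le0.
have phi_gt0 : 0 < phi j s.
  by rewrite lt_neqAle phi_ge0 andbT; apply: contraTneq dj_gt0 => <-; rewrite mulr0 ltxx.
by exists j; split; rewrite // -subr_gt0 -(pmulr_lgt0 _ phi_gt0).
Qed.

End SchemeTransfers.

Local Open Scope classical_set_scope.
Local Open Scope ring_scope.

Section CanonicalSchemes.
Variables (R : realType) (n m : nat) (p : 'I_m -> R) (v : 'I_n -> 'I_m -> R).
Hypotheses (n_gt1 : (1 < n)%N) (p_ge0 : forall j, 0 <= p j)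
  (v_ge0 : forall i j, 0 <= v i j).

Lemma psi_ge0 i j : 0 <= psi p v i j.
Proof. by rewrite mulr_ge0. Qed.

Lemma weight_ge0 (S : finType) (phi : 'I_m -> S -> R) s i :
  (forall j t, 0 <= phi j t) -> 0 <= weight p v phi s i.
Proof. by move=> phi_ge0; apply: sumr_ge0 => j _; rewrite mulr_ge0 ?psi_ge0. Qed.

(* Signal [inl (a, b)] is meant to be won by [a] at the bid of [b]; the pure
   signal [inr j] may only carry item [j]. *)
Local Notation signal := ('I_n * 'I_n + 'I_m)%type.
Implicit Types phi : 'I_m -> signal -> R.

Definition pure phi := forall j j', j' != j -> phi j' (inr j) = 0.

Definition canonical_scheme phi := is_scheme phi /\ pure phi.

Definition pair_mass phi := \sum_(ab : 'I_n * 'I_n) \sum_(j < m) phi j (inl ab).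

Lemma card_supp_pure phi j : pure phi -> (#|supp phi (inr j)| <= 1)%N.
Proof.
move=> phi_pure; rewrite -(cards1 j) subset_leq_card //.
apply/fintype.subsetP => j'; rewrite !inE; case: (eqVneq j' j) => // j'j.
by rewrite phi_pure // ltxx.
Qed.

Lemma weight_pure phi j : pure phi ->
  weight p v phi (inr j) = fun i => phi j (inr j) * psi p v i j.
Proof.
move=> phi_pure; apply/funext => i; rewrite /weight (bigD1 j) //= big1 ?addr0.
  by rewrite mulrC.
by move=> j' j'j; rewrite phi_pure ?mulr0.
Qed.

Lemma pair_mass_transfer phi j ab0 j' e :
  pair_mass (transfer phi j (inl ab0) (inr j') e) = pair_mass phi - e.
Proof.
rewrite /pair_mass -[X in _ - X](mul1r e) -(sum_indicator R ab0) mulr_suml -sumrB.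
apply: eq_bigr => ab _; rewrite (bigD1 j) //= [in RHS](bigD1 j) //= /transfer eqxx.
rewrite (eq_bigr (fun j'' => phi j'' (inl ab))) => [|j'' /negbTE -> //].
by rewrite /=; ring.
Qed.

Lemma canonical_scheme_ge (S : finType) (phi' : 'I_m -> S -> R) : is_scheme phi' ->
  exists phi, canonical_scheme phi /\ revenue p v phi' <= revenue p v phi.
Proof.
move=> [phi'01 phi'_sum]; pose w s := weight p v phi' s.
have phi'_ge0 j s : 0 <= phi' j s by case/andP: (phi'01 j s).
have /all_sig [pr prP] : forall s, {ab : 'I_n * 'I_n |
    (ab.1 != ab.2) && (max2 (w s) == Num.min (w s ab.1) (w s ab.2))}.
  move=> s; apply: sigW; have [a [b [ab ->]]] := max2_min_pair n_gt1 (w s).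
  by exists (a, b); rewrite ab eqxx.
pose phi j (t : signal) := if t is inl ab then \sum_(s | pr s == ab) phi' j s else 0.
have phi_ge0 j t : 0 <= phi j t by case: t => //= ab; exact: sumr_ge0.
exists phi; split.
  split=> [|j j' _] //; split=> [j t | j].
    rewrite phi_ge0 /=; case: t => //= ab; rewrite -(phi'_sum j).
    by rewrite [X in _ <= X](bigID (fun s => pr s == ab)) /= lerDl sumr_ge0.
  by rewrite big_sumType /= [X in _ + X]big1 // addr0 -(phi'_sum j) (partition_big pr xpredT).
rewrite /revenue (partition_big pr xpredT) //= big_sumType /=.
apply: le_trans (_ : _ <= \sum_ab max2 (weight p v phi (inl ab))) _; last first.
  rewrite lerDl; apply: sumr_ge0 => j _.
  by apply: max2_ge0 => // i; exact: weight_ge0.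
apply: ler_sum => -[a b] _.
have -> : weight p v phi (inl (a, b)) = fun i => \sum_(s | pr s == (a, b)) w s i.
  apply/funext => i; rewrite /weight /w /weight exchange_big /=.
  by apply: eq_bigr => j _; rewrite mulr_sumr.
have [<- | ab] := eqVneq a b.
  rewrite big1 => [|s /eqP pr_s]; last by move: (prP s); rewrite pr_s eqxx.
  by apply: max2_ge0 => // i; apply: sumr_ge0 => s _; exact: weight_ge0.
apply: (sum_max2_le (w := w) ab) => s /eqP pr_s.
by move: (prP s); rewrite pr_s => /andP[_ /eqP].
Qed.

Lemma pure_transfer phi j ab e : pure phi -> pure (transfer phi j (inl ab) (inr j) e).
Proof.
move=> phi_pure j1 j2 j21; rewrite /transfer; case: eqP => [ej2 | _]; last exact: phi_pure.
have j1j : (inr j1 == inr j :> signal) = false.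
  by apply/negbTE; apply: contra j21 => /eqP [->]; rewrite ej2.
by rewrite j1j phi_pure -?ej2 //= subrr mul0r addr0.
Qed.

Lemma canonical_scheme_improve phi s : canonical_scheme phi ->
  (2 <= #|supp phi s|)%N -> max1 (weight p v phi s) != max2 (weight p v phi s) ->
  exists phi2, [/\ canonical_scheme phi2, revenue p v phi <= revenue p v phi2
                 & pair_mass phi2 < pair_mass phi].
Proof.
move=> [phi_sch phi_pure] supp2 ne12; have [phi01 _] := phi_sch.
have phi_ge0 j t : 0 <= phi j t by case/andP: (phi01 j t).
case: s supp2 ne12 => [ab0 | j0] supp2 ne12; last first.
  by have := card_supp_pure j0 phi_pure; rewrite leqNgt supp2.
set x := weight p v phi (inl ab0) in ne12 *.
have [a [b [ab xb xba]]] := max2_gap n_gt1 ne12.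
have [j [phi_gt0 psi_ba]] := weight_lt_item (fun j => phi_ge0 j _) xba.
pose e := Num.min (phi j (inl ab0)) ((x a - x b) / (psi p v a j - psi p v b j)).
have e_gt0 : 0 < e by rewrite lt_min phi_gt0 divr_gt0 // subr_gt0.
have e_le : e <= phi j (inl ab0) by rewrite ge_min lexx.
have e_gap : e * psi p v a j - e * psi p v b j <= x a - x b.
  by rewrite -mulrBr -ler_pdivlMr ?subr_gt0 // ge_min lexx orbT.
exists (transfer phi j (inl ab0) (inr j) e); split.
- split; [by apply: transfer_is_scheme => //; rewrite ltW | exact: pure_transfer].
- apply: (revenue_transfer_ge (d := e * psi p v b j)) => //.
    exact: (max2_sub_ge (c := fun i => e * psi p v i j) ab xb e_gap).
  rewrite weight_pure //=.
  exact: (max2_scaleD n_gt1 (x := fun i => psi p v i j) ab (ltW psi_ba) (phi_ge0 _ _)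
    (ltW e_gt0)).
- by rewrite pair_mass_transfer ltrBlDr ltrDl.
Qed.

Local Notation N := #|{: 'I_m * signal}|.

Definition scheme_of_vec (y : 'rV[R]_N) j (t : signal) : R :=
  y ord0 (enum_rank (j, t)).

Definition vec_of_scheme phi : 'rV[R]_N := \row_k phi (enum_val k).1 (enum_val k).2.

Lemma vec_of_schemeK : cancel vec_of_scheme scheme_of_vec.
Proof.
move=> phi; apply/funext => j; apply/funext => t.
by rewrite /scheme_of_vec mxE enum_rankK.
Qed.

Lemma vec_coordE (y : 'rV[R]_N) k :
  y ord0 k = scheme_of_vec y (enum_val k).1 (enum_val k).2.
Proof. by rewrite /scheme_of_vec -surjective_pairing enum_valK. Qed.

Lemma continuous_scheme_of_vec j t : continuous (fun y => scheme_of_vec y j t).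
Proof. exact: coord_continuous. Qed.

Definition canonical_vecs : set 'rV[R]_N :=
  [set y | canonical_scheme (scheme_of_vec y)].

Lemma compact_canonical_vecs : compact canonical_vecs.
Proof.
have -> : canonical_vecs =
    [set y : 'rV[R]_N | forall k, `[0, 1]%classic (y ord0 k)] `&`
    (\bigcap_(j in setT) [set y | \sum_t scheme_of_vec y j t = 1] `&`
     \bigcap_(jj in [set jj | jj.2 != jj.1]) [set y | scheme_of_vec y jj.2 (inr jj.1) = 0]).
  apply/seteqP; split=> y /=.
    move=> [[y01 y_sum] y_pure]; split; last by split=> [j _ | [j j'] /= j'j]; auto.
    by move=> k; rewrite in_itv /= vec_coordE y01.
  move=> [y01 [y_sum y_pure]]; split; last by move=> j j' j'j; exact: (y_pure (j, j')).
  split=> [j t | j]; last exact: y_sum.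
  by have := y01 (enum_rank (j, t)); rewrite in_itv.
apply: compact_closedI.
  by apply: (@rV_compact _ _ (fun=> `[(0:R), 1]%classic)) => _; exact: segment_compact.
apply: closedI; apply: closed_bigI => jj _; apply: closed_level.
  by apply: continuous_big => [|t _]; [exact: add_continuous | exact: continuous_scheme_of_vec].
exact: continuous_scheme_of_vec.
Qed.

Definition revenue_vec (y : 'rV[R]_N) : R :=
  \sum_(t : signal) max2_pairs (weight p v (scheme_of_vec y) t).

Lemma revenue_vecE y : canonical_vecs y -> revenue_vec y = revenue p v (scheme_of_vec y).
Proof.
move=> [[y01 _] _]; apply: eq_bigr => t _; rewrite max2_pairsE // => i.
by apply: weight_ge0 => j t'; case/andP: (y01 j t').
Qed.

Lemma continuous_revenue_vec : continuous revenue_vec.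
Proof.
apply: continuous_big => [|t _]; first exact: add_continuous.
apply: continuous_max2_pairs => i; apply: continuous_big => [|j _]; first exact: add_continuous.
by move=> y; apply: (@continuousM _ _ (fun=> psi p v i j) (fun y => scheme_of_vec y j t));
  [exact: cst_continuous | exact: continuous_scheme_of_vec].
Qed.

Lemma continuous_pair_mass_vec : continuous (fun y => pair_mass (scheme_of_vec y)).
Proof.
apply: continuous_big => [|ab _]; first exact: add_continuous.
apply: continuous_big => [|j _]; first exact: add_continuous.
exact: continuous_scheme_of_vec.
Qed.

Lemma lex_optimal_canonical_scheme : exists phi, [/\ canonical_scheme phi,
  forall phi', canonical_scheme phi' -> revenue p v phi' <= revenue p v phi &
  forall phi', canonical_scheme phi' -> revenue p v phi' = revenue p v phi ->
    pair_mass phi <= pair_mass phi'].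
Proof.
have canon_vec phi : canonical_scheme phi -> canonical_vecs (vec_of_scheme phi).
  by rewrite /canonical_vecs /= vec_of_schemeK.
have revE phi : canonical_scheme phi -> revenue p v phi = revenue_vec (vec_of_scheme phi).
  by move=> phi_canon; rewrite revenue_vecE ?vec_of_schemeK //; exact: canon_vec.
have canon_ne0 : canonical_vecs !=set0.
  exists (vec_of_scheme (fun j t => (t == inr j)%:R)); apply: canon_vec.
  split; [split=> [j t | j] | move=> j j' j'j /=].
  - by case: (_ == _); rewrite ?lexx ?ler01.
  - exact: sum_indicator.
  - suff -> : (inr j == inr j' :> signal) = false by [].
    by apply/negbTE; apply: contra j'j => /eqP [->].
have [ys /[1!inE] ys_canon ys_max] := EVT_max_rV canon_ne0 compact_canonical_vecs
  (continuous_subspaceT continuous_revenue_vec).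
have opt_ne0 : (canonical_vecs `&` [set y | revenue_vec y = revenue_vec ys]) !=set0.
  by exists ys.
have opt_compact : compact (canonical_vecs `&` [set y | revenue_vec y = revenue_vec ys]).
  apply: compact_closedI compact_canonical_vecs _; exact: closed_level continuous_revenue_vec.
have [yo yo_opt yo_min] :=
  EVT_min_rV opt_ne0 opt_compact (continuous_subspaceT continuous_pair_mass_vec).
move: yo_opt; rewrite inE => -[yo_canon yo_rev].
exists (scheme_of_vec yo); split=> [|phi' phi'_canon | phi' phi'_canon rev_eq].
- exact: yo_canon.
- rewrite revE // -revenue_vecE // yo_rev; apply: ys_max; rewrite inE; exact: canon_vec.
- rewrite -[phi' in X in _ <= X]vec_of_schemeK; apply: yo_min; rewrite inE.
  by split; [exact: canon_vec | rewrite /= -revE // rev_eq -revenue_vecE].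
Qed.

End CanonicalSchemes.

Theorem mainTheorem8 (R : realType) (n m : nat) (p : 'I_m -> R)
  (v : 'I_n -> 'I_m -> R) :
  (2 <= n)%N ->
  (forall j, 0 <= p j) -> \sum_(j < m) p j = 1 ->
  (forall i j, 0 <= v i j) ->
  exists (S : finType) (phi : 'I_m -> S -> R),
    [/\ is_scheme phi,
        (forall (S' : finType) (phi' : 'I_m -> S' -> R),
            is_scheme phi' -> revenue p v phi' <= revenue p v phi)
      & forall s : S, (2 <= #|supp phi s|)%N ->
            max1 (weight p v phi s) = max2 (weight p v phi s)].
Proof.
move=> n_gt1 p_ge0 _ v_ge0.
have [phi [phi_canon phi_max phi_min]] := lex_optimal_canonical_scheme n_gt1 p_ge0 v_ge0.
exists ('I_n * 'I_n + 'I_m)%type, phi; split=> [|S' phi' phi'_sch | s supp2].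
- by case: phi_canon.
- have [phi2 [phi2_canon phi2_rev]] := canonical_scheme_ge n_gt1 p_ge0 v_ge0 phi'_sch.
  exact: le_trans phi2_rev (phi_max _ phi2_canon).
- apply/eqP/negPn/negP => ne12.
  have [phi2 [phi2_canon phi2_rev phi2_mass]] :=
    canonical_scheme_improve n_gt1 phi_canon supp2 ne12.
  have rev_eq : revenue p v phi2 = revenue p v phi by apply/le_anti; rewrite phi_max.
  by have := phi_min _ phi2_canon rev_eq; rewrite leNgt phi2_mass.
Qed.
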